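(* Let $(X,<)$ be a linearly ordered set. For all ultrafilters $u,v\in\beta X$: $$u\,\tilde<\,v \iff \mathrm{supp}(u)<\mathrm{supp}(v)\ \vee\ \mathrm{supp}(u)=\mathrm{supp}(v)=I_u=I_v,$$ $$u\,\tilde\le\,v \iff \mathrm{supp}(u)<\mathrm{supp}(v)\ \vee\ \mathrm{supp}(u)=\mathrm{supp}(v)=I_u=I_v\ \vee\ \exists x\in X\,(u=v=\tilde x),$$ $$u\,\tilde>\,v \iff \mathrm{supp}(u)>\mathrm{supp}(v)\ \vee\ \mathrm{supp}(u)=\mathrm{supp}(v)=J_u=J_v,$$ $$u\,\tilde\ge\,v \iff \mathrm{supp}(u)>\mathrm{supp}(v)\ \vee\ \mathrm{supp}(u)=\mathrm{supp}(v)=J_u=J_v\ \vee\ \exists x\in X\,(u=v=\tilde x).$$ Consequently, on non-principal ultrafilters, $\tilde<$ coincides with $\tilde\le$ and $\tilde>$ coincides with $\tilde\ge$.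
   Context: $(X,<)$ is a linear order, $\le$ its reflexive version, $>$ and $\ge$ the converse relations. $\beta X$ is the set of all ultrafilters over $X$; $\tilde x=\{S\subseteq X:x\in S\}$ for $x\in X$. For a binary relation $R$ on $X$, its ultrafilter extension $\tilde R$ on $\beta X$ is defined by $u\,\tilde R\,v\iff\{x\in X:\{y\in X:x\,R\,y\}\in v\}\in u$. Initial segments are downward closed subsets, final segments upward closed subsets. $I_u=\bigcap\{I\in u: I\text{ initial segment}\}$, $J_u=\bigcap\{J\in u: J\text{ final segment}\}$. For non-principal $u$ exactly one of $I_u\in u$, $J_u\in u$ holds. Supports: if $u=\tilde x$ then $\mathrm{supp}(u)=\{x\}$ (a ''point''); if $u$ is non-principal and $I_u\in u$ then $\mathrm{supp}(u)$ is $I_u$ regarded as a left half-cut (a nonempty initial segment with no greatest element); if $u$ is non-principal and $J_u\in u$ then $\mathrm{supp}(u)$ is $J_u$ regarded as a right half-cut (a nonempty final segment with no least element). Two supports are equal iff they are of the same kind (point/left/right) and equal as sets. The notation ''$\mathrm{supp}(u)=I_u$'' means ''$u$ is non-principal and $I_u\in u$'', and ''$\mathrm{supp}(u)=J_u$'' means ''$u$ is non-principal and $J_u\in u$''; thus $\mathrm{supp}(u)=\mathrm{supp}(v)=I_u=I_v$ means both are non-principal, $I_u\in u$, $I_v\in v$ and $I_u=I_v$ (similarly for $J$). The natural linear order on supports (points $\{x\}$, left half-cuts $I$, right half-cuts $J$): $\{x\}<\{y\}$ iff $x<y$; $\{x\}<I$ iff $x\in I$, and $I<\{x\}$ iff $x\notin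 I$; $\{x\}<J$ iff $x\notin J$, and $J<\{x\}$ iff $x\in J$; $I<I'$ iff $I\subsetneq I'$; $J<J'$ iff $J\supsetneq J'$; $I<J$ iff $I\cap J=\emptyset$, and $J<I$ iff $I\cap J\neq\emptyset$. Write $\le$ for its reflexive version. *)

From Stdlib Require Import Classical ClassicalEpsilon FunctionalExtensionality PropExtensionality.

Set Implicit Arguments.

Section Defs.
Variable X : Type.

Definition is_ultrafilter (u : (X -> Prop) -> Prop) : Prop :=
  u (fun _ => True) /\
  ~ u (fun _ => False) /\
  (forall S T : X -> Prop, u S -> (forall x, S x -> T x) -> u T) /\
  (forall S T : X -> Prop, u S -> u T -> u (fun x => S x /\ T x)) /\
  (forall S : X -> Prop, u S \/ u (fun x => ~ S x)).

Definition tilde (x : X) : (X -> Prop) -> Prop := fun S => S x.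

Definition principal (u : (X -> Prop) -> Prop) : Prop := exists x, u = tilde x.

(* ultrafilter extension of a binary relation *)
Definition ext (R : X -> X -> Prop) (u v : (X -> Prop) -> Prop) : Prop :=
  u (fun x => v (fun y => R x y)).

Variable lt : X -> X -> Prop.

Definition le (x y : X) : Prop := lt x y \/ x = y.
Definition gt (x y : X) : Prop := lt y x.
Definition ge (x y : X) : Prop := le y x.

Definition initial_segment (A : X -> Prop) : Prop :=
  forall a b, A b -> lt a b -> A a.
Definition final_segment (J : X -> Prop) : Prop :=
  forall a b, J a -> lt a b -> J b.

Definition Iu (u : (X -> Prop) -> Prop) : X -> Prop :=
  fun x => forall A, initial_segment A -> u A -> A x.
Definition Ju (u : (X -> Prop) -> Prop) : X -> Prop :=
  fun x => forall J, final_segment J -> u J -> J x.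

Inductive support : Type :=
| Pt : X -> support
| LeftCut : (X -> Prop) -> support
| RightCut : (X -> Prop) -> support.

Definition supp (u : (X -> Prop) -> Prop) : support :=
  match excluded_middle_informative (principal u) with
  | left H => Pt (proj1_sig (constructive_indefinite_description _ H))
  | right _ =>
      if excluded_middle_informative (u (Iu u)) then LeftCut (Iu u)
      else RightCut (Ju u)
  end.

Definition supp_lt (s t : support) : Prop :=
  match s, t with
  | Pt x, Pt y => lt x y
  | Pt x, LeftCut K => K x
  | LeftCut K, Pt x => ~ K x
  | Pt x, RightCut J => ~ J x
  | RightCut J, Pt x => J x
  | LeftCut K, LeftCut K' =>
      (forall z, K z -> K' z) /\ exists z, K' z /\ ~ K z
  | RightCut J, RightCut J' =>
      (forall z, J' z -> J z) /\ exists z, J z /\ ~ J' z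
  | LeftCut K, RightCut J => forall z, ~ (K z /\ J z)
  | RightCut J, LeftCut K => exists z, K z /\ J z
  end.

End Defs.

From Stdlib Require Import Classical ClassicalEpsilon FunctionalExtensionality PropExtensionality.

(* For ultrafilters u, v we have  u <~ v  iff  u contains the initial segment
   B_v = {x | {y | x < y} ∈ v}.  The proof has three ingredients.
   1. B_v is computed from the support of v: it is {x | x < b} if v = b~, the
      cut I_v if supp(v) = I_v, and the complement of J_v if supp(v) = J_v.
      This rests on the description of I_u and J_u for a non-principal u:
      x ∈ I_u iff {y | x < y} ∈ u, and x ∈ J_u iff {y | y < x} ∈ u.
   2. An initial segment A belongs to u iff supp(u) lies at or below A,
      regarded as a left cut ([supp_le_cut]).
   3. Comparing a support with {x | x < b}, with a left cut, or with the
      complement of a right cut is pure combinatorics of the order on supports.  The relation <=~ differs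
   from <~ exactly on the diagonal of principal ultrafilters ([ext_le_split]),
   and the statements for >~ and >=~ follow by applying all of this to the
   reversed order, which exchanges I_u and J_u and left and right cuts. *)

Section Ultrafilter.
Context {X : Type} {u : (X -> Prop) -> Prop} (Hu : is_ultrafilter u).

Lemma uf_mono {S T : X -> Prop} : u S -> (forall x, S x -> T x) -> u T.
Proof. destruct Hu as (_ & _ & Hmono & _); apply Hmono. Qed.

Lemma uf_and {S T : X -> Prop} : u S -> u T -> u (fun x => S x /\ T x).
Proof. destruct Hu as (_ & _ & _ & Hand & _); apply Hand. Qed.

Lemma uf_compl (S : X -> Prop) : u S \/ u (fun x => ~ S x).
Proof. destruct Hu as (_ & _ & _ & _ & Hcompl); apply Hcompl. Qed.

Lemma uf_iff (S T : X -> Prop) : (forall x, S x <-> T x) -> (u S <-> u T).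
Proof. intro E; split; intro H; apply (uf_mono H); intro x; apply E. Qed.

Lemma uf_meet {S T : X -> Prop} : u S -> u T -> exists x, S x /\ T x.
Proof.
  intros HS HT. apply NNPP; intro Hdisj.
  destruct Hu as (_ & Hproper & _).
  apply Hproper, (uf_mono (uf_and HS HT)).
  intros x Hx; apply Hdisj; exists x; exact Hx.
Qed.

Lemma uf_union {S T : X -> Prop} : u (fun x => S x \/ T x) -> u S \/ u T.
Proof.
  intro HST.
  destruct (uf_compl S) as [HS | HnS]; [left; exact HS |].
  destruct (uf_compl T) as [HT | HnT]; [right; exact HT |].
  destruct (uf_meet HST (uf_and HnS HnT)) as [x [[Hx | Hx] [HnSx HnTx]]]; contradiction.
Qed.

Lemma uf_point {a : X} : u (fun y => y = a) -> u = tilde a.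
Proof.
  intro Ha. extensionality S. apply propositional_extensionality. split.
  - intro HS. destruct (uf_meet HS Ha) as [y [Hy ->]]; exact Hy.
  - intro HS. apply (uf_mono Ha). intros y ->; exact HS.
Qed.

Lemma nonprincipal_avoid (a : X) : ~ principal u -> u (fun y => y <> a).
Proof.
  intro Hn. destruct (uf_compl (fun y => y = a)) as [Ha | Hna]; [| exact Hna].
  exfalso; apply Hn; exists a; exact (uf_point Ha).
Qed.

End Ultrafilter.

Lemma tilde_inj {X : Type} (a b : X) : tilde a = tilde b -> a = b.
Proof.
  intro E. assert (Hb : tilde b (fun y => y = a)) by (rewrite <- E; reflexivity).
  symmetry; exact Hb.
Qed.

Section Supports.
Context {X : Type} (lt : X -> X -> Prop).

Lemma Iu_initial (u : (X -> Prop) -> Prop) : initial_segment lt (Iu lt u).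
Proof. intros a b Hb Hab A HA HuA. exact (HA a b (Hb A HA HuA) Hab). Qed.

Lemma Ju_final (u : (X -> Prop) -> Prop) : final_segment lt (Ju lt u).
Proof. intros a b Ha Hab J HJ HuJ. exact (HJ a b (Ha J HJ HuJ) Hab). Qed.

Inductive supp_spec (u : (X -> Prop) -> Prop) : support X -> Prop :=
| SuppPoint (a : X) : u = tilde a -> supp_spec u (Pt a)
| SuppLeft : ~ principal u -> u (Iu lt u) -> supp_spec u (LeftCut (Iu lt u))
| SuppRight : ~ principal u -> ~ u (Iu lt u) -> supp_spec u (RightCut (Ju lt u)).

Lemma suppP (u : (X -> Prop) -> Prop) : supp_spec u (supp lt u).
Proof.
  unfold supp. destruct (excluded_middle_informative (principal u)) as [Hp | Hn].
  - destruct (constructive_indefinite_description _ Hp) as [a Ha]. now constructor.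
  - destruct (excluded_middle_informative (u (Iu lt u))); now constructor.
Qed.

Lemma supp_left_cut (u : (X -> Prop) -> Prop) (K : X -> Prop) :
  supp lt u = LeftCut K -> Iu lt u = K.
Proof. destruct (suppP u); congruence. Qed.

Definition well_formed (s : support X) : Prop :=
  match s with
  | Pt _ => True
  | LeftCut K => initial_segment lt K
  | RightCut J => final_segment lt J /\ forall x, J x -> exists y, J y /\ lt y x
  end.

Lemma ext_le_split (u v : (X -> Prop) -> Prop) :
  is_ultrafilter u -> is_ultrafilter v ->
  (ext (le lt) u v <-> ext lt u v \/ exists x, u = tilde x /\ v = tilde x).
Proof.
  intros Hu Hv. destruct (classic (principal v)) as [[b ->] | Hnv].
  - change (u (fun x => lt x b \/ x = b) <->
            u (fun x => lt x b) \/ exists x, u = tilde x /\ tilde b = tilde x).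
    split.
    + intro H. destruct (uf_union Hu H) as [Hlt | Heq]; [left; exact Hlt |].
      right; exists b; split; [exact (uf_point Hu Heq) | reflexivity].
    + intros [H | [x [-> Eb]]].
      * apply (uf_mono Hu H); intros x Hx; left; exact Hx.
      * apply tilde_inj in Eb; subst x; right; reflexivity.
  - assert (Hno : ~ exists x, u = tilde x /\ v = tilde x)
      by (intros [x [_ Ev]]; apply Hnv; exists x; exact Ev).
    assert (E : ext (le lt) u v <-> ext lt u v).
    { apply (uf_iff Hu); intro x. split; intro H.
      - apply (uf_mono Hv (uf_and Hv H (nonprincipal_avoid Hv x Hnv))).
        intros y [[Hxy | Hxy] Hyx]; [exact Hxy | congruence].
      - apply (uf_mono Hv H); intros y Hxy; left; exact Hxy. }
    rewrite E; tauto.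
Qed.

Lemma Iu_flip (u : (X -> Prop) -> Prop) : Iu (fun x y => lt y x) u = Ju lt u.
Proof.
  extensionality x; apply propositional_extensionality.
  split; intros H A HA HuA; apply H; auto; intros a b Ha Hab; exact (HA b a Ha Hab).
Qed.

Lemma Ju_flip (u : (X -> Prop) -> Prop) : Ju (fun x y => lt y x) u = Iu lt u.
Proof.
  extensionality x; apply propositional_extensionality.
  split; intros H A HA HuA; apply H; auto; intros a b Ha Hab; exact (HA b a Ha Hab).
Qed.

End Supports.

Lemma ext_ge_split {X : Type} (lt : X -> X -> Prop) (u v : (X -> Prop) -> Prop) :
  is_ultrafilter u -> is_ultrafilter v ->
  (ext (ge lt) u v <-> ext (gt lt) u v \/ exists x, u = tilde x /\ v = tilde x).
Proof.
  intros Hu Hv. rewrite <- (ext_le_split (fun x y => lt y x) u v Hu Hv).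
  apply (uf_iff Hu); intro x; apply (uf_iff Hv); intro y.
  unfold ge, le; split; intros [H | H]; auto.
Qed.

(* The support s lies at or below the left cut A:  a ∈ A for a point a,
   inclusion for a left cut, and meeting A for a right cut. *)
Definition supp_le_cut {X : Type} (s : support X) (A : X -> Prop) : Prop :=
  match s with
  | Pt a => A a
  | LeftCut K => forall x, K x -> A x
  | RightCut J => exists x, A x /\ J x
  end.

(* Strict linear orders, bundled so that they can be reversed. *)
Record linear_order {X : Type} (lt : X -> X -> Prop) : Prop := {
  ord_irrefl : forall x, ~ lt x x;
  ord_trans : forall x y z, lt x y -> lt y z -> lt x z;
  ord_total : forall x y, lt x y \/ x = y \/ lt y x }.
Arguments ord_irrefl {X lt}.
Arguments ord_trans {X lt}.
Arguments ord_total {X lt}.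

Lemma linear_order_flip {X : Type} {lt : X -> X -> Prop} :
  linear_order lt -> linear_order (fun x y => lt y x).
Proof.
  intros [irr trn tot]; split; eauto.
  intros x y; destruct (tot x y) as [H | [H | H]]; auto.
Qed.

Section CutOfUltrafilter.
Context {X : Type} {lt : X -> X -> Prop} (Hlin : linear_order lt).
Context {u : (X -> Prop) -> Prop} (Hu : is_ultrafilter u).

Lemma not_Iu_below (x : X) : ~ Iu lt u x -> u (fun y => lt y x).
Proof.
  intro HnI. apply NNPP; intro Hno. apply HnI. intros A HA HuA.
  apply NNPP; intro HAx. apply Hno, (uf_mono Hu HuA). intros y Hy.
  destruct (ord_total Hlin y x) as [Hyx | [-> | Hxy]]; [exact Hyx | contradiction |].
  exfalso; exact (HAx (HA x y Hy Hxy)).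
Qed.

Lemma above_iff_Iu (x : X) : ~ principal u -> (u (fun y => lt x y) <-> Iu lt u x).
Proof.
  intro Hn. split.
  - intro Habove. apply NNPP; intro HnI.
    destruct (uf_meet Hu Habove (not_Iu_below x HnI)) as [y [Hxy Hyx]].
    exact (ord_irrefl Hlin x (ord_trans Hlin _ _ _ Hxy Hyx)).
  - intro HI. destruct (uf_compl Hu (fun y => lt x y)) as [H | H]; [exact H |].
    exfalso. apply (ord_irrefl Hlin x).
    apply (HI (fun y => lt y x)).
    + intros a b Hbx Hab; exact (ord_trans Hlin _ _ _ Hab Hbx).
    + apply (uf_mono Hu (uf_and Hu H (nonprincipal_avoid Hu x Hn))).
      intros y [Hnxy Hyx].
      destruct (ord_total Hlin y x) as [Hlt | [Heq | Hgt]];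
        [exact Hlt | congruence | contradiction].
Qed.

End CutOfUltrafilter.

Section SupportsOfUltrafilters.
Context {X : Type} {lt : X -> X -> Prop} (Hlin : linear_order lt).

Lemma below_iff_Ju {u : (X -> Prop) -> Prop} (x : X) :
  is_ultrafilter u -> ~ principal u -> (u (fun y => lt y x) <-> Ju lt u x).
Proof.
  intros Hu Hn. rewrite <- Iu_flip. exact (above_iff_Iu (linear_order_flip Hlin) Hu x Hn).
Qed.

Lemma Ju_iff_not_Iu {u : (X -> Prop) -> Prop} (x : X) :
  is_ultrafilter u -> ~ principal u -> (Ju lt u x <-> ~ Iu lt u x).
Proof.
  intros Hu Hn. split.
  - intros HJ HI.
    destruct (uf_meet Hu (proj2 (above_iff_Iu Hlin Hu x Hn) HI)
                         (proj2 (below_iff_Ju x Hu Hn) HJ)) as [y [Hxy Hyx]].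
    exact (ord_irrefl Hlin x (ord_trans Hlin _ _ _ Hxy Hyx)).
  - intro HnI. exact (proj1 (below_iff_Ju x Hu Hn) (not_Iu_below Hlin Hu x HnI)).
Qed.

Lemma Iu_xor_Ju {u : (X -> Prop) -> Prop} :
  is_ultrafilter u -> ~ principal u -> (u (Iu lt u) <-> ~ u (Ju lt u)).
Proof.
  intros Hu Hn. split.
  - intros HI HJ. destruct (uf_meet Hu HI HJ) as [z [HIz HJz]].
    exact (proj1 (Ju_iff_not_Iu z Hu Hn) HJz HIz).
  - intro HnJ. destruct (uf_compl Hu (Ju lt u)) as [HJ | HcJ]; [contradiction |].
    apply (uf_mono Hu HcJ). intros z HnJz.
    apply NNPP; intro HnIz. exact (HnJz (proj2 (Ju_iff_not_Iu z Hu Hn) HnIz)).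
Qed.

Lemma Ju_in_ultrafilter {u : (X -> Prop) -> Prop} :
  is_ultrafilter u -> ~ principal u -> ~ u (Iu lt u) -> u (Ju lt u).
Proof. intros Hu Hn HnI. apply NNPP; intro HnJ. exact (HnI (proj2 (Iu_xor_Ju Hu Hn) HnJ)). Qed.

Lemma supp_well_formed (u : (X -> Prop) -> Prop) :
  is_ultrafilter u -> well_formed lt (supp lt u).
Proof.
  intro Hu. destruct (suppP lt u) as [a _ | Hn _ | Hn HnI]; simpl.
  - exact I.
  - apply Iu_initial.
  - split; [apply Ju_final |].
    intros x HJx. apply (uf_meet Hu).
    + exact (Ju_in_ultrafilter Hu Hn HnI).
    + exact (proj2 (below_iff_Ju x Hu Hn) HJx).
Qed.

Lemma initial_in_ultrafilter (u : (X -> Prop) -> Prop) (A : X -> Prop) :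
  is_ultrafilter u -> initial_segment lt A -> (u A <-> supp_le_cut (supp lt u) A).
Proof.
  intros Hu HA. destruct (suppP lt u) as [a -> | Hn HI | Hn HnI]; simpl.
  - reflexivity.
  - split; [intros HuA x HIx; exact (HIx A HA HuA) | intro Hsub; exact (uf_mono Hu HI Hsub)].
  - split; [intro HuA; exact (uf_meet Hu HuA (Ju_in_ultrafilter Hu Hn HnI)) |].
    intros [z [HAz HJz]]. apply (uf_mono Hu (proj2 (below_iff_Ju z Hu Hn) HJz)).
    intros y Hyz; exact (HA y z HAz Hyz).
Qed.

Lemma supp_le_cut_point (s : support X) (b : X) :
  well_formed lt s -> (supp_le_cut s (fun x => lt x b) <-> supp_lt lt s (Pt b)).
Proof.
  destruct s as [a | K | J]; simpl.
  - reflexivity.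
  - intro HK. split.
    + intros Hbelow HKb. exact (ord_irrefl Hlin b (Hbelow b HKb)).
    + intros HnKb x HKx.
      destruct (ord_total Hlin x b) as [Hxb | [-> | Hbx]]; [exact Hxb | contradiction |].
      exfalso; exact (HnKb (HK b x HKx Hbx)).
  - intros [HJ Hnoleast]. split.
    + intros [x [Hxb HJx]]; exact (HJ x b HJx Hxb).
    + intro HJb. destruct (Hnoleast b HJb) as [x [HJx Hxb]]. exists x; split; assumption.
Qed.

Lemma supp_le_cut_left (s : support X) (K : X -> Prop) :
  supp_le_cut s K <-> supp_lt lt s (LeftCut K) \/ s = LeftCut K.
Proof.
  destruct s as [a | K' | J]; simpl.
  - split; [intro H; left; exact H | intros [H | H]; [exact H | discriminate]].
  - split.
    + intro Hsub. destruct (classic (exists z, K z /\ ~ K' z)) as [Hstrict | Hnstrict].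
      * left; split; assumption.
      * right. f_equal. extensionality z; apply propositional_extensionality.
        split; [apply Hsub | intro HKz; apply NNPP; intro HnK'z; apply Hnstrict; eauto].
    + intros [[Hsub _] | E]; [exact Hsub | injection E as ->; auto].
  - split; [intro H; left; exact H | intros [H | H]; [exact H | discriminate]].
Qed.

Lemma supp_le_cut_right (s : support X) (J : X -> Prop) :
  well_formed lt s -> final_segment lt J ->
  (supp_le_cut s (fun x => ~ J x) <-> supp_lt lt s (RightCut J)).
Proof.
  intros Hs HJ. destruct s as [a | K | J']; simpl.
  - reflexivity.
  - split.
    + intros Hsub z [HKz HJz]; exact (Hsub z HKz HJz).
    + intros Hdisj z HKz HJz; exact (Hdisj z (conj HKz HJz)).
  - destruct Hs as [HJ' _]. split.
    + intros [z [HnJz HJ'z]]. split; [| exists z; split; assumption].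
      intros w HJw.
      destruct (ord_total Hlin w z) as [Hwz | [-> | Hzw]].
      * exfalso; exact (HnJz (HJ w z HJw Hwz)).
      * contradiction.
      * exact (HJ' z w HJ'z Hzw).
    + intros [_ [z [HJ'z HnJz]]]. exists z; split; assumption.
Qed.

Lemma ext_lt_supp (u v : (X -> Prop) -> Prop) :
  is_ultrafilter u -> is_ultrafilter v ->
  (ext lt u v <->
     supp_lt lt (supp lt u) (supp lt v) \/
     (supp lt u = supp lt v /\ supp lt u = LeftCut (Iu lt u) /\
      supp lt v = LeftCut (Iu lt v) /\ Iu lt u = Iu lt v)).
Proof.
  intros Hu Hv.
  (* u <~ v means that u contains the initial segment B_v. *)
  assert (HB : initial_segment lt (fun x => v (fun y => lt x y))).
  { intros a b Hb Hab. apply (uf_mono Hv Hb).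
    intros y Hby; exact (ord_trans Hlin _ _ _ Hab Hby). }
  unfold ext; rewrite (initial_in_ultrafilter u _ Hu HB).
  pose proof (supp_well_formed u Hu) as Hwf.
  destruct (suppP lt v) as [b -> | Hnv HIv | Hnv HnIv].
  -
    rewrite (supp_le_cut_point (supp lt u) b Hwf).
    split; [intro H; left; exact H | intros [H | (_ & _ & E & _)]; [exact H | discriminate E]].
  -
    replace (fun x => v (fun y => lt x y)) with (Iu lt v)
      by (extensionality x; apply propositional_extensionality; symmetry;
          exact (above_iff_Iu Hlin Hv x Hnv)).
    rewrite supp_le_cut_left. split.
    + (* a left cut equal to I_v is I_u as well *)
      intros [H | Hs]; [left; exact H | right].
      pose proof (supp_left_cut lt u _ Hs) as E; rewrite E in *; repeat split; assumption.
    + intros [H | (Hs & _)]; [left; exact H | right; exact Hs].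
  -
    replace (fun x => v (fun y => lt x y)) with (fun x => ~ Ju lt v x)
      by (extensionality x; apply propositional_extensionality;
          rewrite (Ju_iff_not_Iu x Hv Hnv), (above_iff_Iu Hlin Hv x Hnv); tauto).
    rewrite (supp_le_cut_right (supp lt u) _ Hwf (Ju_final lt v)).
    split; [intro H; left; exact H | intros [H | (_ & _ & E & _)]; [exact H | discriminate E]].
Qed.

End SupportsOfUltrafilters.

(* Reversing the order turns left cuts into right cuts and vice versa. *)
Definition swap {X : Type} (s : support X) : support X :=
  match s with Pt x => Pt x | LeftCut K => RightCut K | RightCut J => LeftCut J end.

Lemma swap_eq {X : Type} (s t : support X) : swap s = swap t <-> s = t.
Proof. split; [destruct s, t; simpl; congruence | intros ->; reflexivity]. Qed.

Lemma swap_eq_left {X : Type} (s : support X) (K : X -> Prop) :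
  swap s = LeftCut K <-> s = RightCut K.
Proof. split; [destruct s; simpl; congruence | intros ->; reflexivity]. Qed.

Lemma supp_lt_flip {X : Type} (lt : X -> X -> Prop) (s t : support X) :
  supp_lt (fun x y => lt y x) (swap s) (swap t) <-> supp_lt lt t s.
Proof. destruct s, t; simpl; firstorder. Qed.

Section Reversal.
Context {X : Type} {lt : X -> X -> Prop} (Hlin : linear_order lt).

Lemma supp_flip (u : (X -> Prop) -> Prop) :
  is_ultrafilter u -> supp (fun x y => lt y x) u = swap (supp lt u).
Proof.
  intro Hu. unfold supp.
  destruct (excluded_middle_informative (principal u)) as [Hp | Hn]; [reflexivity |].
  rewrite (Iu_flip lt u), (Ju_flip lt u).
  pose proof (Iu_xor_Ju Hlin Hu Hn) as Hxor.
  destruct (excluded_middle_informative (u (Ju lt u)));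
  destruct (excluded_middle_informative (u (Iu lt u))); simpl; tauto || reflexivity.
Qed.

Lemma ext_gt_supp (u v : (X -> Prop) -> Prop) :
  is_ultrafilter u -> is_ultrafilter v ->
  (ext (gt lt) u v <->
     supp_lt lt (supp lt v) (supp lt u) \/
     (supp lt u = supp lt v /\ supp lt u = RightCut (Ju lt u) /\
      supp lt v = RightCut (Ju lt v) /\ Ju lt u = Ju lt v)).
Proof.
  intros Hu Hv. change (ext (gt lt) u v) with (ext (fun x y => lt y x) u v).
  rewrite (ext_lt_supp (linear_order_flip Hlin) u v Hu Hv), (supp_flip u Hu), (supp_flip v Hv),
    !Iu_flip, supp_lt_flip, swap_eq, !swap_eq_left.
  reflexivity.
Qed.

End Reversal.

Theorem theorem1 (X : Type) (lt : X -> X -> Prop)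
  (lt_irrefl : forall x, ~ lt x x)
  (lt_trans : forall x y z, lt x y -> lt y z -> lt x z)
  (lt_total : forall x y, lt x y \/ x = y \/ lt y x)
  (u v : (X -> Prop) -> Prop)
  (Hu : is_ultrafilter u) (Hv : is_ultrafilter v) :
  (ext lt u v <->
     supp_lt lt (supp lt u) (supp lt v) \/
     (supp lt u = supp lt v /\ supp lt u = LeftCut (Iu lt u) /\
      supp lt v = LeftCut (Iu lt v) /\ Iu lt u = Iu lt v)) /\
  (ext (le lt) u v <->
     supp_lt lt (supp lt u) (supp lt v) \/
     (supp lt u = supp lt v /\ supp lt u = LeftCut (Iu lt u) /\
      supp lt v = LeftCut (Iu lt v) /\ Iu lt u = Iu lt v) \/
     (exists x : X, u = tilde x /\ v = tilde x)) /\
  (ext (gt lt) u v <->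
     supp_lt lt (supp lt v) (supp lt u) \/
     (supp lt u = supp lt v /\ supp lt u = RightCut (Ju lt u) /\
      supp lt v = RightCut (Ju lt v) /\ Ju lt u = Ju lt v)) /\
  (ext (ge lt) u v <->
     supp_lt lt (supp lt v) (supp lt u) \/
     (supp lt u = supp lt v /\ supp lt u = RightCut (Ju lt u) /\
      supp lt v = RightCut (Ju lt v) /\ Ju lt u = Ju lt v) \/
     (exists x : X, u = tilde x /\ v = tilde x)) /\
  (~ principal u -> ~ principal v ->
     (ext lt u v <-> ext (le lt) u v) /\ (ext (gt lt) u v <-> ext (ge lt) u v)).
Proof.
  pose proof (@Build_linear_order X lt lt_irrefl lt_trans lt_total) as Hlin.
  rewrite (ext_le_split lt u v Hu Hv), (ext_ge_split lt u v Hu Hv),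
    (ext_lt_supp Hlin u v Hu Hv), (ext_gt_supp Hlin u v Hu Hv).
  assert (Hdiag : ~ principal v -> ~ exists x, u = tilde x /\ v = tilde x)
    by (intros Hnv [x [_ Ev]]; apply Hnv; exists x; exact Ev).
  repeat split; try tauto.
Qed.
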